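(* Let $X$ be a rank-one subshift with cut sequence $(r_n)$ and spacer sequence $(s_{n,i})$, and suppose there are nonnegative integers $c<d$ such that for all sufficiently large $n$: $s_{n,r_n}=0$ and $s_{n,i}\in\{c,d\}$ for all $0\le i<r_n$, with both values occurring among $0\le i<r_n$. Then there exists a rank-one subshift generating the same language whose spacer sequence $(\tilde s_{n,i})$ (with the same cut sequence) satisfies, for all sufficiently large $n$, $\tilde s_{n,r_n}=0$ and $\tilde s_{n,i}\in\{0,d-c\}$ for all $0\le i<r_n$, with both values occurring.
   Context: A rank-one subshift with cut sequence $(r_n)_{n\ge1}$ (positive integers) and spacer sequence $(s_{n,i})_{n\ge1,\,0\le i\le r_n}$ (nonnegative integers) is defined by $B_1=0$, $B_{n+1}=B_n1^{s_{n,0}}B_n1^{s_{n,1}}\cdots B_n1^{s_{n,r_n}}$; it is the set of $x\in\{0,1\}^{\mathbb Z}$ all of whose finite subwords are subwords of some $B_n$. Its language is the set of finite words occurring in its elements. *)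

(* Symbols: 0 = false, 1 = true. *)
From mathcomp Require Import all_boot all_algebra.
Set Implicit Arguments. Unset Strict Implicit. Unset Printing Implicit Defensive.
Import GRing.Theory Num.Theory.

Definition rank_one_step (B : seq bool) (rn : nat) (sn : nat -> nat) : seq bool :=
  flatten [seq B ++ nseq (sn i) true | i <- iota 0 rn.+1].

(* rank_one_word r s n = B_n for n >= 1 (B_1 = 0); index 0 is a harmless
   duplicate of B_1. *)
Fixpoint rank_one_word (r : nat -> nat) (s : nat -> nat -> nat) (n : nat)
  : seq bool :=
  match n with
  | 0 => [:: false]
  | 1 => [:: false]
  | m.+1 => rank_one_step (rank_one_word r s m) (r m) (s m)
  end.

Definition window (x : int -> bool) (k : int) (l : nat) : seq bool :=
  mkseq (fun j => x (k + j%:Z)%R) l.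

Definition rank_one_subshift (r : nat -> nat) (s : nat -> nat -> nat)
  (x : int -> bool) : Prop :=
  forall (k : int) (l : nat), exists n, infix (window x k l) (rank_one_word r s n).

Definition rank_one_language (r : nat -> nat) (s : nat -> nat -> nat)
  (w : seq bool) : Prop :=
  exists x, rank_one_subshift r s x /\ exists k, window x k (size w) = w.

From mathcomp Require Import all_boot all_algebra.

(* Once every non-final spacer of stage n is at least c and the final one is
   0, moving a block of c ones from the front of each spacer onto the end of
   B_n does not change B_{n+1} except for a trailing 1^c.  So if, from stage
   M + 1 on, all spacers below the last are lowered by c, and the final spacer
   of stage M is raised by c, then every later word becomes B_n 1^c.  These
   words have the same subwords as the original ones, because B_n 1^c is a
   prefix of B_{n+1} when the first spacer of stage n is at least c. *)

Lemma rank_one_word_S r s n : (0 < n)%N ->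
  rank_one_word r s n.+1 = rank_one_step (rank_one_word r s n) (r n) (s n).
Proof. by case: n. Qed.

Lemma rank_one_step_ext B rn f g : f =1 g ->
  rank_one_step B rn f = rank_one_step B rn g.
Proof. by move=> efg; congr flatten; apply: eq_map => i; rewrite efg. Qed.

Lemma rank_one_stepE B rn sn :
  rank_one_step B rn sn = B ++ nseq (sn 0%N) true ++
     flatten [seq B ++ nseq (sn i) true | i <- iota 1 rn].
Proof. by rewrite /rank_one_step /= catA. Qed.

Lemma rank_one_step_rcons B rn sn : rank_one_step B rn sn =
  flatten [seq B ++ nseq (sn i) true | i <- iota 0 rn] ++ (B ++ nseq (sn rn) true).
Proof. by rewrite /rank_one_step -addn1 iotaD map_cat flatten_cat /= cats0. Qed.

Lemma rank_one_step_pad_last B rn sn c :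
  rank_one_step B rn (fun i => if i == rn then sn i + c else sn i)%N =
  rank_one_step B rn sn ++ nseq c true.
Proof.
rewrite !rank_one_step_rcons eqxx nseqD -!catA; congr (flatten _ ++ _).
apply/eq_in_map => i; rewrite mem_iota add0n => /andP[_ ltirn].
by rewrite (ltn_eqF ltirn).
Qed.

Lemma rank_one_step_shift B rn sn c :
    (forall i, (i < rn)%N -> (c <= sn i)%N) -> sn rn = 0%N ->
  rank_one_step (B ++ nseq c true) rn (fun i => sn i - c)%N =
  rank_one_step B rn sn ++ nseq c true.
Proof.
move=> c_le snrn0; rewrite !rank_one_step_rcons snrn0 sub0n cats0 /= -!catA.
congr (flatten _ ++ _); apply/eq_in_map => i; rewrite mem_iota add0n => /andP[_ ltirn].
by rewrite -catA -nseqD subnKC // c_le.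
Qed.

Lemma infix_rank_one_step_pad c w B rn sn : (c <= sn 0%N)%N ->
  infix w (B ++ nseq c true) -> infix w (rank_one_step B rn sn).
Proof.
move=> c_le w_inf; rewrite rank_one_stepE -(subnKC c_le) nseqD -!catA catA.
exact: infix_catr.
Qed.

Lemma rank_one_language_eq r s s' :
    (forall w, (exists n, infix w (rank_one_word r s' n)) <->
               (exists n, infix w (rank_one_word r s n))) ->
  forall w, rank_one_language r s' w <-> rank_one_language r s w.
Proof.
move=> same_factors w.
have same_subshift x : rank_one_subshift r s' x <-> rank_one_subshift r s x.
  by split=> x_in k l; apply/same_factors; exact: x_in.
by split=> -[x [x_in x_w]]; exists x; split=> //; apply/same_subshift.
Qed.

Section ShiftSpacers.

Variables (r : nat -> nat) (s : nat -> nat -> nat) (M c : nat).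
Hypothesis M_pos : (0 < M)%N.
Hypothesis r_pos : forall n, (M < n)%N -> (0 < r n)%N.
Hypothesis last_spacer0 : forall n, (M < n)%N -> s n (r n) = 0%N.
Hypothesis c_le_spacer : forall n i, (M < n)%N -> (i < r n)%N -> (c <= s n i)%N.

Definition shift_spacers (n i : nat) : nat :=
  if (n < M)%N then s n i
  else if n == M then (if i == r n then s n i + c else s n i)%N
  else (s n i - c)%N.

Lemma shift_spacers_high n i : (M < n)%N -> shift_spacers n i = (s n i - c)%N.
Proof. by move=> ltMn; rewrite /shift_spacers ltnNge (ltnW ltMn) gtn_eqF. Qed.

Lemma rank_one_word_shift_low n : (n <= M)%N ->
  rank_one_word r shift_spacers n = rank_one_word r s n.
Proof.
elim: n => [|[|n] IHn] // leSnM.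
rewrite !(rank_one_word_S r _ n.+1) // IHn ?(ltnW leSnM) //.
by apply: rank_one_step_ext => i; rewrite /shift_spacers leSnM.
Qed.

Lemma rank_one_word_shift_high n : (M < n)%N ->
  rank_one_word r shift_spacers n = rank_one_word r s n ++ nseq c true.
Proof.
elim: n => [|n IHn] //; rewrite ltnS leq_eqVlt => /predU1P[<- | ltMn].
  rewrite !rank_one_word_S // rank_one_word_shift_low // -rank_one_step_pad_last.
  by apply: rank_one_step_ext => i; rewrite /shift_spacers ltnn eqxx.
rewrite !rank_one_word_S ?(leq_ltn_trans _ ltMn) // IHn // -rank_one_step_shift.
- by apply: rank_one_step_ext => i; rewrite shift_spacers_high.
- by move=> i; apply: c_le_spacer.
- exact: last_spacer0.
Qed.

Lemma shift_spacers_factors w :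
  (exists n, infix w (rank_one_word r shift_spacers n)) <->
  (exists n, infix w (rank_one_word r s n)).
Proof.
split=> -[n w_inf]; case: (leqP n M) => [lenM | ltMn].
- by exists n; rewrite -rank_one_word_shift_low.
- exists n.+1; rewrite rank_one_word_S ?(leq_ltn_trans _ ltMn) //.
  apply: (infix_rank_one_step_pad c); first exact: c_le_spacer _ _ ltMn (r_pos _ ltMn).
  by rewrite -rank_one_word_shift_high.
- by exists n; rewrite rank_one_word_shift_low.
- by exists n; rewrite rank_one_word_shift_high //; apply: infix_catr.
Qed.

End ShiftSpacers.

Theorem proposition2 (r : nat -> nat) (s : nat -> nat -> nat)
  (r_pos : forall n, (1 <= n)%N -> (0 < r n)%N)
  (c d : nat) (hcd : (c < d)%N)
  (hs : exists N, forall n, (N <= n)%N ->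
      s n (r n) = 0%N /\
      (forall i, (i < r n)%N -> s n i = c \/ s n i = d) /\
      (exists i, (i < r n)%N /\ s n i = c) /\
      (exists i, (i < r n)%N /\ s n i = d)) :
  exists s' : nat -> nat -> nat,
    (forall w, rank_one_language r s' w <-> rank_one_language r s w) /\
    (exists N, forall n, (N <= n)%N ->
      s' n (r n) = 0%N /\
      (forall i, (i < r n)%N -> s' n i = 0%N \/ s' n i = (d - c)%N) /\
      (exists i, (i < r n)%N /\ s' n i = 0%N) /\
      (exists i, (i < r n)%N /\ s' n i = (d - c)%N)).
Proof.
case: hs => N spacers_cd; set M := N.+1.
have {}spacers_cd n : (M < n)%N -> _ := fun ltMn => spacers_cd n (ltnW (ltnW ltMn)).
have c_le_spacer n i : (M < n)%N -> (i < r n)%N -> (c <= s n i)%N.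
  by move=> /spacers_cd[_ [s_cd _]] /s_cd[] ->; last exact: ltnW.
exists (shift_spacers r s M c); split.
  apply/rank_one_language_eq => w; apply: shift_spacers_factors => //.
  - by move=> n ltMn; apply: r_pos; exact: leq_ltn_trans ltMn.
  - by move=> n /spacers_cd[].
exists M.+1 => n ltMn; have s'E i := shift_spacers_high r s M c n i ltMn.
case: (spacers_cd n ltMn) => [snrn0 [s_cd [[i [ltirn sic]] [j [ltjrn sjd]]]]].
split; first by rewrite s'E snrn0.
split; first by move=> k /s_cd[] skc; rewrite s'E skc; [left; rewrite subnn | right].
by split; [exists i; rewrite s'E sic subnn | exists j; rewrite s'E sjd].
Qed.
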